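(* Let $f\in\Delta(\mathcal{G},\le)$, let $1\le\alpha\le\beta$, and suppose $f_\alpha\in\Delta(\mathcal{A},\le)$. Let $H,G_1,\dots,G_r$ be finite simple graphs and $q$ a positive integer such that $\widehat{H}\otimes\mathcal{C}_q\le\bigoplus_{d=1}^r\widehat{G_d}\otimes\mathcal{C}_d$. Then $f_\beta(\widehat{H}\otimes\mathcal{C}_q)\le f_\beta\big(\bigoplus_{d=1}^r\widehat{G_d}\otimes\mathcal{C}_d\big)$, i.e. $f(H)q^\beta\le\sum_{d=1}^r f(G_d)d^\beta$.
   Context: Graphs are finite simple undirected; $x\simeq x'$ means equal or adjacent. Strong product $G\boxtimes H$: vertex set $V(G)\times V(H)$, $(g,h)\simeq(g',h')$ iff $g\simeq g'$ and $h\simeq h'$. $\sqcup$ is disjoint union. $H\le G$ for graphs means there is a homomorphism from the complement of $H$ to the complement of $G$. $\mathcal{G}$ is the semiring of isomorphism classes of graphs with $\sqcup,\boxtimes$, and $\Delta(\mathcal{G},\le)$ is the set of maps $f$ from graphs to $\mathbb{R}_{\ge0}$ with $f(\text{empty graph})=0$, $f(K_1)=1$, $f(G\sqcup H)=f(G)+f(H)$, $f(G\boxtimes H)=f(G)f(H)$, and $H\le G\Rightarrow f(H)\le f(G)$. A noncommutative graph is a subspace $S\subseteq B(\mathcal{H})$ ($\mathcal{H}$ finite-dimensional complex Hilbert space) with $I\in S$, $S^*=S$; isomorphism is unitary conjugation. A cohomomorphism from $T\subseteq B(\mathcal{K})$ to $S\subseteq B(\mathcal{H})$ is a finite family of linear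 maps $E_i:\mathcal{K}\to\mathcal{H}$ with $\sum_iE_i^*E_i=I$ and $E_i^*SE_j\subseteq T$ for all $i,j$; write $T\le S$ if one exists. Tensor product and direct sum of noncommutative graphs are $\operatorname{span}\{A\otimes B\}$ and $\{A\oplus B\}$. For a graph $G$, $\widehat{G}=\operatorname{span}\{|x\rangle\langle x'|:x\simeq x'\}\subseteq B(\mathbb{C}^{V(G)})$; $\mathcal{C}_d=\mathbb{C}I\subseteq B(\mathbb{C}^d)$. $\mathcal{A}$ is the semiring (under $\oplus,\otimes$, isomorphism classes) generated by all $\widehat{G}$ and all $\mathcal{C}_d$; every element has the form $\bigoplus_{d=1}^r\widehat{G_d}\otimes\mathcal{C}_d$. For $f\in\Delta(\mathcal{G},\le)$ and $\alpha\ge1$, $f_\alpha:\mathcal{A}\to\mathbb{R}_{\ge0}$ is the semiring homomorphism $f_\alpha(\bigoplus_{d=1}^r\widehat{G_d}\otimes\mathcal{C}_d)=\sum_{d=1}^r f(G_d)d^\alpha$. $\Delta(\mathcal{A},\le)$ denotes the set of semiring homomorphisms $\mathcal{A}\to\mathbb{R}_{\ge0}$ that are monotone with respect to $\le$. *)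

From mathcomp Require Import all_boot all_algebra.
From mathcomp Require Import reals exp.
From mathcomp Require Import complex mxtens.

Set Implicit Arguments.
Unset Strict Implicit.
Unset Printing Implicit Defensive.

Import GRing.Theory Num.Theory.
Local Open Scope ring_scope.

Record graph := Graph {
  gV : finType;
  gadj : rel gV;
  gadj_sym : symmetric gadj;
  gadj_irr : irreflexive gadj }.

Definition gsim (G : graph) (x y : gV G) : bool := (x == y) || @gadj G x y.

Lemma gsim_sym (G : graph) : symmetric (@gsim G).
Proof. by move=> x y; rewrite /gsim eq_sym gadj_sym. Qed.

Definition gempty : graph :=
  @Graph void (fun _ _ => false) (fun _ _ => erefl) (fun _ => erefl).

Definition gK1 : graph :=
  @Graph unit (fun _ _ => false) (fun _ _ => erefl) (fun _ => erefl).

Definition union_adj (G H : graph) (x y : (gV G + gV H)%type) : bool :=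
  match x, y with
  | inl a, inl b => @gadj G a b
  | inr a, inr b => @gadj H a b
  | _, _ => false
  end.

Lemma union_adj_sym G H : symmetric (@union_adj G H).
Proof. by case=> a [] b //=; rewrite gadj_sym. Qed.

Lemma union_adj_irr G H : irreflexive (@union_adj G H).
Proof. by case=> a /=; rewrite gadj_irr. Qed.

Definition gunion (G H : graph) : graph :=
  @Graph (gV G + gV H)%type (@union_adj G H)
         (@union_adj_sym G H) (@union_adj_irr G H).

Definition strong_adj (G H : graph) (x y : (gV G * gV H)%type) : bool :=
  [&& gsim x.1 y.1, gsim x.2 y.2 & x != y].

Lemma strong_adj_sym G H : symmetric (@strong_adj G H).
Proof. by move=> x y; rewrite /strong_adj gsim_sym (gsim_sym x.2) eq_sym. Qed.

Lemma strong_adj_irr G H : irreflexive (@strong_adj G H).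
Proof. by move=> x; rewrite /strong_adj eqxx !andbF. Qed.

Definition gstrong (G H : graph) : graph :=
  @Graph (gV G * gV H)%type (@strong_adj G H)
         (@strong_adj_sym G H) (@strong_adj_irr G H).

Definition compl_adj (G : graph) (x y : gV G) : bool :=
  (x != y) && ~~ @gadj G x y.

Lemma compl_adj_sym G : symmetric (@compl_adj G).
Proof. by move=> x y; rewrite /compl_adj eq_sym gadj_sym. Qed.

Lemma compl_adj_irr G : irreflexive (@compl_adj G).
Proof. by move=> x; rewrite /compl_adj eqxx. Qed.

Definition gcompl (G : graph) : graph :=
  @Graph (gV G) (@compl_adj G) (@compl_adj_sym G) (@compl_adj_irr G).

Definition ghom (G H : graph) : Prop :=
  exists phi : gV G -> gV H, forall x y, @gadj G x y -> @gadj H (phi x) (phi y).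

Definition graph_le (H G : graph) : Prop := ghom (gcompl H) (gcompl G).

(* Delta(G, <=): monotone semiring homomorphisms to R_{>=0}.  A map on
   isomorphism classes is the same as a map on graphs invariant under
   isomorphism; invariance follows from monotonicity. *)
Definition in_DeltaG (R : realType) (f : graph -> R) : Prop :=
  (forall G, 0 <= f G) /\
  f gempty = 0 /\
  f gK1 = 1 /\
  (forall G H, f (gunion G H) = f G + f H) /\
  (forall G H, f (gstrong G H) = f G * f H) /\
  (forall G H, graph_le H G -> f H <= f G).

(* A subspace S of B(C^n) = 'M_n is encoded (as in mxalgebra) by a matrix    *)
(* whose row space is { mxvec A | A in S }.                                  *)

Section NC.
Variable R : rcfType.
Local Notation C := (R[i]).

Record ncgraph := NCGraph { ncdim : nat; ncsp : 'M[C]_(ncdim * ncdim) }.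

Definition ncmem (S : ncgraph) (A : 'M[C]_(ncdim S)) : bool :=
  (mxvec A <= ncsp S)%MS.

Definition adjmx m n (E : 'M[C]_(m, n)) : 'M[C]_(n, m) := (map_mx conjc E)^T.

Definition nc_le (T S : ncgraph) : Prop :=
  exists (k : nat) (E : 'I_k -> 'M[C]_(ncdim S, ncdim T)),
    (\sum_(i < k) adjmx (E i) *m E i = 1%:M) /\
    (forall (i j : 'I_k) (A : 'M[C]_(ncdim S)),
        @ncmem S A -> @ncmem T (adjmx (E i) *m A *m E j)).

Definition nc_hat (G : graph) : ncgraph :=
  @NCGraph #|gV G|
    (\sum_(x : gV G) \sum_(y : gV G | gsim x y)
        <<mxvec (delta_mx (enum_rank x) (enum_rank y) : 'M[C]_(#|gV G|))>>)%MS.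

Definition nc_C (d : nat) : ncgraph :=
  @NCGraph d (<<mxvec (1%:M : 'M[C]_d)>>)%MS.

Definition nc_tens (S T : ncgraph) : ncgraph :=
  @NCGraph (ncdim S * ncdim T)
    (\sum_(i < ncdim S * ncdim S) \sum_(j < ncdim T * ncdim T)
        <<mxvec (vec_mx (row i (ncsp S)) *t vec_mx (row j (ncsp T)))>>)%MS.

Definition nc_oplus (S T : ncgraph) : ncgraph :=
  @NCGraph (ncdim S + ncdim T)
    ((\sum_(i < ncdim S * ncdim S)
        <<mxvec (block_mx (vec_mx (row i (ncsp S))) 0 0 0
                 : 'M[C]_(ncdim S + ncdim T))>>) +
     (\sum_(j < ncdim T * ncdim T)
        <<mxvec (block_mx 0 0 0 (vec_mx (row j (ncsp T)))
                 : 'M[C]_(ncdim S + ncdim T))>>))%MS.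

Definition nc_zero : ncgraph := @NCGraph 0 0.

Fixpoint ncnf_from (k : nat) (Gs : seq graph) : ncgraph :=
  match Gs with
  | [::] => nc_zero
  | G :: Gs' => nc_oplus (nc_tens (nc_hat G) (nc_C k)) (ncnf_from k.+1 Gs')
  end.

(* normal form element of A: (+)_{d=1}^r \hat{G_d} (x) C_d, Gs = [G_1;...;G_r] *)
Definition ncnf (Gs : seq graph) : ncgraph := ncnf_from 1 Gs.

End NC.

Definition falpha (R : realType) (f : graph -> R) (alpha : R) (Gs : seq graph) : R :=
  \sum_(d < size Gs) f (nth gempty Gs d) * powR (d.+1)%:R alpha.

(* f_alpha in Delta(A, <=): f_alpha is monotone w.r.t. cohomomorphism.
   Every element of A is isomorphic to some ncnf Gs. *)
Definition falpha_monotone (R : realType) (f : graph -> R) (alpha : R) : Prop :=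
  forall Gs Hs : seq graph,
    nc_le (ncnf R Hs) (ncnf R Gs) -> falpha f alpha Hs <= falpha f alpha Gs.

From mathcomp Require Import all_boot all_algebra.
From mathcomp Require Import reals exp.
From mathcomp Require Import complex mxtens.
From mathcomp Require Import order.

Set Implicit Arguments.
Unset Strict Implicit.
Unset Printing Implicit Defensive.

Import Order.TTheory GRing.Theory Num.Theory.
Local Open Scope ring_scope.

(* If (E_i) is a cohomomorphism from \hat H (x) C_q into
   (+)_d \hat G_d (x) C_d, every compression E_i^* M E_i lies in
   \hat H (x) C_q, hence has the form A (x) I_q.  For a summand with d < q,
   compressing the projector |x><x| (x) I_d of that summand gives
   Z^* Z = A (x) I_q with Z = (<x| (x) I_d) E_i having only d rows; as a
   nonzero A (x) I_q has rank at least q, Z = 0.  So each E_i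
   vanishes on the summands with d < q and factors through the normal form in
   which those G_d are replaced by the empty graph.  Since \hat H (x) C_q is, up
   to zero-dimensional summands, the normal form with H in position q,
   monotonicity of f_alpha gives f(H) q^alpha <= sum_{d >= q} f(G_d) d^alpha,
   and multiplying by q^(beta - alpha) <= d^(beta - alpha) gives the claim. *)

Section MatrixSpaces.
Variable F : fieldType.

Lemma submx_row_ind m n (P : 'rV[F]_n -> Prop) (S : 'M[F]_(m, n)) u :
  P 0 -> (forall a u v, P u -> P v -> P (a *: u + v)) ->
  (forall i, P (row i S)) -> (u <= S)%MS -> P u.
Proof.
move=> P0 PC Prow /submxP [w ->]; rewrite mulmx_sum_row.
elim/big_ind: _ => // [x y Px Py | i _].
  by rewrite -[x]scale1r; apply: PC.
by rewrite -[_ *: _]addr0; apply: PC.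
Qed.

Lemma sub_sumsmx_ind n (I : finType) (P : 'rV[F]_n -> Prop)
    (B : I -> 'M[F]_n) u :
  P 0 -> (forall u v, P u -> P v -> P (u + v)) ->
  (forall i v, (v <= B i)%MS -> P v) -> (u <= \sum_i B i)%MS -> P u.
Proof.
move=> P0 PD PB /sub_sumsmxP [w ->].
by elim/big_ind: _ => // i _; apply: (PB i); apply: submxMl.
Qed.

Lemma sub_addsmx_ind n (P : 'rV[F]_n -> Prop) m1 m2
    (B1 : 'M[F]_(m1, n)) (B2 : 'M[F]_(m2, n)) u :
  (forall u v, P u -> P v -> P (u + v)) ->
  (forall v, (v <= B1)%MS -> P v) -> (forall v, (v <= B2)%MS -> P v) ->
  (u <= B1 + B2)%MS -> P u.
Proof.
by move=> PD P1 P2 /sub_addsmxP [w ->]; apply: PD; [apply: P1 | apply: P2];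
  apply: submxMl.
Qed.

Lemma sub_genmx_rV_ind n (P : 'rV[F]_n -> Prop) (g : 'rV[F]_n) v :
  (forall a, P (a *: g)) -> (v <= <<g>>)%MS -> P v.
Proof. by move=> Pg; rewrite genmxE => /sub_rVP [a ->]. Qed.

Lemma mxrank_mxsub_le m n m' n' f g (M : 'M[F]_(m, n)) :
  (\rank (mxsub f g M : 'M_(m', n')) <= \rank M)%N.
Proof.
have -> : mxsub f g M = rowsub f 1%:M *m M *m colsub g 1%:M :> 'M_(m', n').
  by rewrite -rowsubE -mxsub_mul mulmx1.
exact: leq_trans (mxrankM_maxl _ _) (mxrankM_maxr _ _).
Qed.

End MatrixSpaces.

Section TensorProduct.
Variable R : comPzRingType.

Lemma tensmxDl m n p q (A B : 'M[R]_(m, n)) (D : 'M[R]_(p, q)) :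
  (A + B) *t D = A *t D + B *t D.
Proof. by apply/matrixP => i j; rewrite !mxE mulrDl. Qed.

Lemma tensmxDr m n p q (A : 'M[R]_(m, n)) (B D : 'M[R]_(p, q)) :
  A *t (B + D) = A *t B + A *t D.
Proof. by apply/matrixP => i j; rewrite !mxE mulrDr. Qed.

Lemma tensmxZl m n p q a (A : 'M[R]_(m, n)) (D : 'M[R]_(p, q)) :
  (a *: A) *t D = a *: (A *t D).
Proof. by apply/matrixP => i j; rewrite !mxE mulrA. Qed.

Lemma tensmxZr m n p q a (A : 'M[R]_(m, n)) (B : 'M[R]_(p, q)) :
  A *t (a *: B) = a *: (A *t B).
Proof. by apply/matrixP => i j; rewrite !mxE mulrCA. Qed.

Lemma tensmx_suml m n p q (I : finType) (F : I -> 'M[R]_(m, n))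
    (B : 'M[R]_(p, q)) :
  (\sum_i F i) *t B = \sum_i (F i *t B).
Proof.
by elim/big_rec2: _ => [|i x y _ <-]; rewrite ?tens0mx ?tensmxDl.
Qed.

Lemma tensmx11 m n : (1%:M : 'M[R]_m) *t (1%:M : 'M[R]_n) = 1%:M.
Proof.
apply/matrixP => i j.
case: (mxtens_indexP i) => i1 i2; case: (mxtens_indexP j) => j1 j2.
rewrite tensmxE !mxE (can_eq (@mxtens_indexK _ _)) xpair_eqE.
by case: (i1 == j1); case: (i2 == j2); rewrite ?mulr1 ?mulr0 ?mul0r.
Qed.

End TensorProduct.

Lemma mxrank_tens1 (F : fieldType) n q (A : 'M[F]_n) :
  A != 0 -> (q <= \rank (A *t (1%:M : 'M[F]_q)))%N.
Proof.
move=> nzA.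
have [[a b] /= Aab | A0] := pickP [pred ab : 'I_n * 'I_n | A ab.1 ab.2 != 0].
  pose f (a : 'I_n) (l : 'I_q) := mxtens_index (a, l).
  have sub_tens1 : mxsub (f a) (f b) (A *t 1%:M) = A a b *: 1%:M :> 'M_q.
    by apply/matrixP => i j; rewrite [LHS]mxE tensmxE !mxE.
  have := mxrank_mxsub_le (f a) (f b) (A *t (1%:M : 'M_q)).
  by rewrite sub_tens1 mxrank_scale_nz ?mxrank1.
case/eqP: nzA; apply/matrixP => a b; rewrite mxE.
by apply/eqP/negbFE; apply: (A0 (a, b)).
Qed.

Section Adjoint.
Variable R : rcfType.
Local Notation C := (R[i]).

Lemma adjmxM m n p (A : 'M[C]_(m, n)) (B : 'M[C]_(n, p)) :
  adjmx (A *m B) = adjmx B *m adjmx A.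
Proof. by rewrite /adjmx map_mxM trmx_mul. Qed.

Lemma adjmx0 m n : adjmx (0 : 'M[C]_(m, n)) = 0.
Proof. by rewrite /adjmx map_mx0 trmx0. Qed.

Lemma adjmx1 n : adjmx (1%:M : 'M[C]_n) = 1%:M.
Proof. by rewrite /adjmx map_mx1 trmx1. Qed.

Lemma adjmx_row_mx m n1 n2 (A : 'M[C]_(m, n1)) (B : 'M[C]_(m, n2)) :
  adjmx (row_mx A B) = col_mx (adjmx A) (adjmx B).
Proof. by rewrite /adjmx map_row_mx tr_row_mx. Qed.

Lemma adjmx_col_mx m1 m2 n (A : 'M[C]_(m1, n)) (B : 'M[C]_(m2, n)) :
  adjmx (col_mx A B) = row_mx (adjmx A) (adjmx B).
Proof. by rewrite /adjmx map_col_mx tr_col_mx. Qed.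

Lemma adjmx_block_mx m1 m2 n1 n2 (A : 'M[C]_(m1, n1)) (B : 'M[C]_(m1, n2))
    (D : 'M[C]_(m2, n1)) (E : 'M[C]_(m2, n2)) :
  adjmx (block_mx A B D E) = block_mx (adjmx A) (adjmx D) (adjmx B) (adjmx E).
Proof. by rewrite /adjmx map_block_mx tr_block_mx. Qed.

Lemma adjmx_tens m n p q (A : 'M[C]_(m, n)) (B : 'M[C]_(p, q)) :
  adjmx (A *t B) = adjmx A *t adjmx B.
Proof. by rewrite /adjmx map_mxT trmx_tens. Qed.

Lemma adjmx_delta m n (i : 'I_m) (j : 'I_n) :
  adjmx (delta_mx i j : 'M[C]_(m, n)) = delta_mx j i.
Proof. by apply/matrixP => a b; rewrite !mxE conjc_nat andbC. Qed.

Lemma adjmx_mul_self_eq0 m n (Z : 'M[C]_(m, n)) : adjmx Z *m Z = 0 -> Z = 0.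
Proof.
move=> gramZ; apply/matrixP => l j.
have sum_norm2 : \sum_(l' < m) Z l' j * (Z l' j)^* = 0.
  transitivity ((adjmx Z *m Z) j j); last by rewrite gramZ mxE.
  by rewrite mxE; apply: eq_bigr => l' _; rewrite !mxE mulrC.
have := @psumr_eq0P _ _ predT _ (fun i _ => mulcJ_ge0 (Z i j)) sum_norm2 l isT.
by move/eqP; rewrite mulf_eq0 conjc_eq0 orbb mxE => /eqP.
Qed.

(* [Z^* Z] has rank at most [k < q], while a nonzero [A *t 1%:M] has rank
   at least [q]. *)
Lemma gram_tens1_eq0 k n q (Z : 'M[C]_(k, n * q)) (A : 'M[C]_n) :
  (k < q)%N -> adjmx Z *m Z = A *t 1%:M -> Z = 0.
Proof.
move=> kq gramZ; apply: adjmx_mul_self_eq0; rewrite gramZ.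
suff -> : A = 0 by rewrite tens0mx.
apply: contraTeq kq => nzA; rewrite -leqNgt.
apply: leq_trans (mxrank_tens1 q nzA) _; rewrite -gramZ.
exact: leq_trans (mxrankM_maxr _ _) (rank_leq_row Z).
Qed.

Lemma compress_tens1_eq0 s k n q (E : 'M[C]_(s * k, n * q)) :
  (k < q)%N ->
  (forall r : 'I_s, exists A : 'M[C]_n,
     adjmx E *m (delta_mx r r *t 1%:M) *m E = A *t 1%:M) ->
  E = 0.
Proof.
move=> kq compressE.
pose P (r : 'I_s) := (delta_mx 0 r : 'M[C]_(1, s)) *t (1%:M : 'M[C]_k).
have gramP r : adjmx (P r) *m P r = delta_mx r r *t 1%:M.
  by rewrite adjmx_tens adjmx_delta adjmx1 tensmx_mul mul_delta_mx mulmx1.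
have PE0 r : P r *m E = 0.
  have [A compressA] := compressE r.
  apply: (gram_tens1_eq0 (A := A)); first by rewrite mul1n.
  by rewrite adjmxM -mulmxA (mulmxA (adjmx (P r))) gramP mulmxA.
rewrite -[E]mul1mx -tensmx11 mx1_sum_delta tensmx_suml mulmx_suml.
rewrite big1 // => r _.
by rewrite -gramP -mulmxA PE0 mulmx0.
Qed.

End Adjoint.

Local Notation "A \in_nc S" := (@ncmem _ S A) (at level 70, S at level 69).

Section NCGraph.
Variable R : rcfType.
Local Notation C := (R[i]).
Implicit Types S T X Z : ncgraph R.

Lemma ncmem0 S : 0 \in_nc S.
Proof. by rewrite /ncmem linear0 sub0mx. Qed.

Lemma ncmemD S A B : A \in_nc S -> B \in_nc S -> A + B \in_nc S.
Proof. by rewrite /ncmem linearD; apply: addmx_sub. Qed.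

Lemma ncmemZ S a A : A \in_nc S -> a *: A \in_nc S.
Proof. by rewrite /ncmem linearZ; apply: scalemx_sub. Qed.

Lemma ncmem_linear S T (phi : 'M[C]_(ncdim S) -> 'M[C]_(ncdim T)) :
  linear phi -> (forall i, phi (vec_mx (row i (ncsp S))) \in_nc T) ->
  forall A, A \in_nc S -> phi A \in_nc T.
Proof.
move=> lin_phi phi_row A SA; rewrite -[A]mxvecK.
apply: (submx_row_ind (P := fun u => phi (vec_mx u) \in_nc T) _ _ _ SA) => //
  [|a u v Tu Tv].
  have := lin_phi (-1) 0 0; rewrite scaler0 addr0 scaleN1r addNr linear0 => ->.
  exact: ncmem0.
by rewrite linearP lin_phi; apply: ncmemD => //; apply: ncmemZ.
Qed.

Lemma ncmem_tens S T A B :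
  A \in_nc S -> B \in_nc T -> A *t B \in_nc nc_tens S T.
Proof.
move=> SA TB.
have row_tens i : vec_mx (row i (ncsp S)) *t B \in_nc nc_tens S T.
  apply: (@ncmem_linear T (nc_tens S T) (tensmx (vec_mx (row i (ncsp S))))) TB.
    by move=> a B1 B2; rewrite tensmxDr tensmxZr.
  move=> j; rewrite /ncmem.
  by apply: (sumsmx_sup i) => //; apply: (sumsmx_sup j) => //; rewrite genmxE.
apply: (@ncmem_linear S (nc_tens S T) (fun A => A *t B)) SA => //.
by move=> a A1 A2; rewrite tensmxDl tensmxZl.
Qed.

Lemma ncmem_oplus S T A B :
  A \in_nc S -> B \in_nc T -> block_mx A 0 0 B \in_nc nc_oplus S T.
Proof.
move=> SA TB.
have -> : block_mx A 0 0 B = block_mx A 0 0 0 + block_mx 0 0 0 B.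
  by rewrite add_block_mx !addr0 add0r.
apply: ncmemD.
  apply: (@ncmem_linear S (nc_oplus S T) (fun A => block_mx A 0 0 0)) SA
    => [a A1 A2 | i].
    by rewrite scale_block_mx add_block_mx !scaler0 !addr0.
  rewrite /ncmem; apply: submx_trans (addsmxSl _ _).
  by apply: (sumsmx_sup i) => //; rewrite genmxE.
apply: (@ncmem_linear T (nc_oplus S T) (fun B => block_mx 0 0 0 B)) TB
  => [a B1 B2 | i].
  by rewrite scale_block_mx add_block_mx !scaler0 !addr0.
rewrite /ncmem; apply: submx_trans (addsmxSr _ _).
by apply: (sumsmx_sup i) => //; rewrite genmxE.
Qed.

Lemma ncmem_oplus_inv S T M :
  M \in_nc nc_oplus S T ->
  exists A B, [/\ M = block_mx A 0 0 B, A \in_nc S & B \in_nc T].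
Proof.
rewrite {1}/ncmem -{2}[M]mxvecK; move: (mxvec M) => u.
pose P (u : 'rV_((ncdim S + ncdim T) * (ncdim S + ncdim T))) :=
  exists A B, [/\ vec_mx u = block_mx A 0 0 B, A \in_nc S & B \in_nc T].
have PD x y : P x -> P y -> P (x + y).
  move=> [A [B [eAB SA TB]]] [A' [B' [eAB' SA' TB']]].
  exists (A + A'), (B + B'); rewrite linearD /= eAB eAB' add_block_mx !addr0.
  by split => //; apply: ncmemD.
apply: (sub_addsmx_ind (P := P)) => // v;
  apply: (sub_sumsmx_ind (P := P)) => // [|i w];
  do ?by exists 0, 0; rewrite linear0 block_mx0; split => //; apply: ncmem0.
  apply: sub_genmx_rV_ind => a; exists (a *: vec_mx (row i (ncsp S))), 0.
  rewrite linearZ /= mxvecK scale_block_mx !scaler0.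
  split => //; last exact: ncmem0.
  by apply: ncmemZ; rewrite /ncmem vec_mxK row_sub.
apply: sub_genmx_rV_ind => a; exists 0, (a *: vec_mx (row i (ncsp T))).
rewrite linearZ /= mxvecK scale_block_mx !scaler0.
split => //; first exact: ncmem0.
by apply: ncmemZ; rewrite /ncmem vec_mxK row_sub.
Qed.

Lemma ncmem_tens1_inv S q M :
  M \in_nc nc_tens S (nc_C R q) -> exists2 A, M = A *t 1%:M & A \in_nc S.
Proof.
rewrite {1}/ncmem -{2}[M]mxvecK; move: (mxvec M) => u.
pose P (u : 'rV_(ncdim S * q * (ncdim S * q))) :=
  exists2 A, vec_mx u = A *t 1%:M & A \in_nc S.
have P0 : P 0 by exists 0; rewrite ?linear0 ?tens0mx //; apply: ncmem0.
have PD x y : P x -> P y -> P (x + y).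
  move=> [A eA SA] [B eB SB]; exists (A + B); last exact: ncmemD.
  by rewrite linearD /= eA eB tensmxDl.
apply: (sub_sumsmx_ind (P := P)) => // i v.
apply: (sub_sumsmx_ind (P := P)) => // j w.
apply: sub_genmx_rV_ind => a.
have /sub_rVP [c ->] : (row j (ncsp (nc_C R q)) <= mxvec (1%:M : 'M[C]_q))%MS.
  by move: (row_sub j (ncsp (nc_C R q))); rewrite /= genmxE.
exists ((a * c) *: vec_mx (row i (ncsp S))).
  by rewrite linearZ /= mxvecK linearZ /= mxvecK tensmxZr tensmxZl scalerA.
by apply: ncmemZ; rewrite /ncmem vec_mxK row_sub.
Qed.

Lemma ncmem_hat_delta (G : graph) (r : 'I_#|gV G|) :
  delta_mx r r \in_nc nc_hat R G.
Proof.
rewrite /ncmem /=; apply: (sumsmx_sup (enum_val r)) => //.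
apply: (sumsmx_sup (enum_val r)); first by rewrite /gsim eqxx.
by rewrite enum_valK genmxE.
Qed.

Lemma nc_le_trans T S X : nc_le T S -> nc_le S X -> nc_le T X.
Proof.
move=> [k [E [sumE memE]]] [l [F [sumF memF]]].
pose G (p : 'I_k * 'I_l) := F p.2 *m E p.1.
exists #|{: 'I_k * 'I_l}|, (fun p => G (enum_val p)); split.
  rewrite -(big_enum_val (A := {: 'I_k * 'I_l}) (fun p => adjmx (G p) *m G p)).
  rewrite /=.
  rewrite -(pair_bigA _ (fun i j => adjmx (G (i, j)) *m G (i, j))) /= -sumE.
  apply: eq_bigr => i _.
  under eq_bigr => j _ do rewrite /G /= adjmxM -mulmxA [adjmx (F j) *m _]mulmxA.
  by rewrite -mulmx_sumr -mulmx_suml sumF mul1mx.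
move=> i j A XA; rewrite /G !adjmxM -!mulmxA.
rewrite [adjmx (F _) *m (A *m _)]mulmxA [adjmx (F _) *m A *m _]mulmxA mulmxA.
by apply: memE; apply: memF.
Qed.

Lemma flatmx_eq m n (M N : 'M[C]_(m, n)) : m = 0%N -> M = N.
Proof. by move=> m0; move: M N; rewrite m0 => M N; rewrite !flatmx0. Qed.

Lemma nc_le_oplus0r X Z : ncdim Z = 0%N -> nc_le (nc_oplus X Z) X.
Proof.
move=> Z0; exists 1%N, (fun _ => row_mx 1%:M 0); split.
  rewrite big_ord1 adjmx_row_mx adjmx1 adjmx0 mul_col_row mul1mx mulmx0 mul0mx.
  by rewrite [RHS]scalar_mx_block; congr block_mx; apply: flatmx_eq.
move=> _ _ M XM; rewrite adjmx_row_mx adjmx1 adjmx0 mul_col_mx mul1mx mul0mx.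
rewrite mul_col_row !mulmx1 !mulmx0 ?mul0mx.
exact: ncmem_oplus XM (ncmem0 _).
Qed.

Lemma nc_le_oplus0l Z X : ncdim Z = 0%N -> nc_le (nc_oplus Z X) X.
Proof.
move=> Z0; exists 1%N, (fun _ => row_mx 0 1%:M); split.
  rewrite big_ord1 adjmx_row_mx adjmx1 adjmx0 mul_col_row mul1mx mulmx0 mul0mx.
  by rewrite mulmx1 [RHS]scalar_mx_block; congr block_mx; apply: flatmx_eq.
move=> _ _ M XM; rewrite adjmx_row_mx adjmx1 adjmx0 mul_col_mx mul1mx mul0mx.
rewrite mul_col_row !mulmx1 !mulmx0 ?mul0mx.
exact: ncmem_oplus (ncmem0 _) XM.
Qed.

Lemma nc_le_ncnf_pad (H : graph) n k :
  nc_le (ncnf_from R k (nseq n gempty ++ [:: H]))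
        (nc_tens (nc_hat R H) (nc_C R (k + n))).
Proof.
elim: n k => [|n IHn] k /=; first by rewrite addn0; apply: nc_le_oplus0r.
apply: nc_le_trans (nc_le_oplus0l _ _) _; first by rewrite /= card_void.
by rewrite addnS -addSn; apply: IHn.
Qed.

End NCGraph.

Fixpoint erase_below (q k : nat) (Gs : seq graph) : seq graph :=
  match Gs with
  | [::] => [::]
  | G :: Gs' => (if (k < q)%N then gempty else G) :: erase_below q k.+1 Gs'
  end.

Lemma size_erase_below q k Gs : size (erase_below q k Gs) = size Gs.
Proof. by elim: Gs k => [|G Gs IHGs] k //=; rewrite IHGs. Qed.

Lemma nth_erase_below q k Gs d :
  nth gempty (erase_below q k Gs) d =
  if (k + d < q)%N then gempty else nth gempty Gs d.
Proof.
elim: Gs k d => [|G Gs IHGs] k [|d] /=; rewrite ?nth_nil ?addn0 ?if_same //.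
by rewrite IHGs addSnnS.
Qed.

Section EraseBelow.
Variable R : rcfType.
Local Notation C := (R[i]).

Definition erase_block_mx (b : bool) (G : graph) k :
    'M[C]_(#|gV (if b then gempty else G)| * k, #|gV G| * k) :=
  if b as b return 'M_(#|gV (if b then gempty else G)| * k, #|gV G| * k)
  then 0 else 1%:M.

(* An erased summand contributes a block with [#|gV gempty| * k = 0] rows. *)
Fixpoint erase_below_mx q k Gs :
    'M[C]_(ncdim (ncnf_from R k (erase_below q k Gs)),
           ncdim (ncnf_from R k Gs)) :=
  if Gs is G :: Gs'
  then block_mx (erase_block_mx (k < q)%N G k) 0 0 (erase_below_mx q k.+1 Gs')
  else 0.

Lemma erase_below_mx_mem q k Gs A :
  A \in_nc ncnf_from R k (erase_below q k Gs) ->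
  adjmx (erase_below_mx q k Gs) *m A *m erase_below_mx q k Gs
    \in_nc ncnf_from R k Gs.
Proof.
elim: Gs k A => [|G Gs IHGs] k A /=.
  by rewrite mulmx0 => _; apply: ncmem0.
case/ncmem_oplus_inv => [A1 [A2 [-> memA1 memA2]]].
rewrite adjmx_block_mx !adjmx0 !mulmx_block !mulmx0 !mul0mx !addr0 !add0r.
rewrite !mul0mx.
apply: ncmem_oplus (IHGs _ _ memA2); rewrite /erase_block_mx.
case: (k < q)%N A1 memA1 => A1 memA1; first by rewrite mulmx0 ncmem0.
by rewrite adjmx1 mul1mx mulmx1.
Qed.

Lemma compress_col_block_mx m1 m2 n (E1 : 'M[C]_(m1, n)) (E2 : 'M[C]_(m2, n))
    M1 M2 :
  adjmx (col_mx E1 E2) *m block_mx M1 0 0 M2 *m col_mx E1 E2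
    = adjmx E1 *m M1 *m E1 + adjmx E2 *m M2 *m E2.
Proof. by rewrite adjmx_col_mx mul_row_block !mulmx0 addr0 add0r mul_row_col. Qed.

Lemma erase_block_mxK (b : bool) G k m (E : 'M[C]_(#|gV G| * k, m)) :
  (b -> E = 0) ->
  adjmx (erase_block_mx b G k) *m (erase_block_mx b G k *m E) = E.
Proof.
rewrite /erase_block_mx; case: b => [/(_ isT) -> | _].
  by rewrite !mulmx0.
by rewrite adjmx1 !mul1mx.
Qed.

Lemma erase_below_mxK q k Gs n (E : 'M[C]_(ncdim (ncnf_from R k Gs), n * q)) :
  (forall M, M \in_nc ncnf_from R k Gs ->
     exists A : 'M[C]_n, adjmx E *m M *m E = A *t 1%:M) ->
  adjmx (erase_below_mx q k Gs) *m (erase_below_mx q k Gs *m E) = E.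
Proof.
elim: Gs k E => [|G Gs IHGs] k E compressE /=; first exact: flatmx_eq.
pose E' : 'M_(#|gV G| * k + ncdim (ncnf_from R k.+1 Gs), n * q) := E.
have eE : E = col_mx (usubmx E') (dsubmx E') by rewrite vsubmxK.
move: compressE; rewrite eE; move: (usubmx E') (dsubmx E') => E1 E2 compressE.
rewrite adjmx_block_mx !adjmx0 !mul_block_col !mul0mx !addr0 !add0r.
congr col_mx.
  apply: erase_block_mxK => kq; apply: compress_tens1_eq0 kq _ => r.
  have memr : delta_mx r r *t 1%:M \in_nc nc_tens (nc_hat R G) (nc_C R k).
    by apply: ncmem_tens (ncmem_hat_delta _ r) _; rewrite /ncmem /= genmxE.
  have [A compressA] := compressE _ (ncmem_oplus memr (ncmem0 _)).
  by exists A; rewrite -compressA compress_col_block_mx mulmx0 mul0mx addr0.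
apply: IHGs => M memM.
have [A compressA] := compressE _ (ncmem_oplus (ncmem0 _) memM).
by exists A; rewrite -compressA compress_col_block_mx mulmx0 mul0mx add0r.
Qed.

Lemma nc_le_erase_below (S : ncgraph R) q k Gs :
  nc_le (nc_tens S (nc_C R q)) (ncnf_from R k Gs) ->
  nc_le (nc_tens S (nc_C R q)) (ncnf_from R k (erase_below q k Gs)).
Proof.
case=> l [E [sumE memE]]; set P := erase_below_mx q k Gs.
have PE i : adjmx P *m (P *m E i) = E i.
  apply: erase_below_mxK => M memM.
  by have [A -> _] := ncmem_tens1_inv (memE i i M memM); exists A.
exists l, (fun i => P *m E i); split.
  by rewrite -sumE; apply: eq_bigr => i _; rewrite adjmxM -mulmxA PE.
move=> i j A memA; rewrite adjmxM.
have -> : adjmx (E i) *m adjmx P *m A *m (P *m E j)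
          = adjmx (E i) *m (adjmx P *m A *m P) *m E j by rewrite !mulmxA.
exact/memE/erase_below_mx_mem.
Qed.

End EraseBelow.

Lemma powR_mul_sub (R : realType) (x a b : R) :
  x != 0 -> x `^ a * x `^ (b - a) = x `^ b.
Proof. by move=> x0; rewrite -powRD ?subrKC // x0 implybT. Qed.

Section FAlpha.
Variables (R : realType) (f : graph -> R).
Hypotheses (f_ge0 : forall G, 0 <= f G) (f_gempty : f gempty = 0).

Lemma falpha_pad a H n :
  falpha f a (nseq n gempty ++ [:: H]) = f H * powR n.+1%:R a.
Proof.
rewrite /falpha size_cat size_nseq addn1 big_ord_recr /= nth_cat size_nseq ltnn.
rewrite subnn big1 ?add0r // => d _.
by rewrite nth_cat size_nseq ltn_ord nth_nseq ltn_ord f_gempty mul0r.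
Qed.

Lemma falpha_erase_below_le a b q Gs : a <= b ->
  powR q%:R (b - a) * falpha f a (erase_below q 1 Gs) <= falpha f b Gs.
Proof.
move=> ab; rewrite /falpha size_erase_below mulr_sumr; apply: ler_sum => d _.
rewrite nth_erase_below add1n; case: ltnP => [_ | le_qd].
  by rewrite f_gempty mul0r mulr0 mulr_ge0 ?powR_ge0.
rewrite -[_ `^ b](powR_mul_sub a) ?pnatr_eq0 // mulrCA.
apply: ler_wpM2l; first exact: f_ge0.
rewrite mulrC; apply: ler_wpM2l; first exact: powR_ge0.
by apply: ge0_ler_powR; rewrite ?subr_ge0 ?nnegrE ?ler0n ?ler_nat.
Qed.

End FAlpha.

Theorem corollary3p3 (R : realType) (f : graph -> R) (alpha beta : R) :
  in_DeltaG f -> 1 <= alpha -> alpha <= beta ->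
  falpha_monotone f alpha ->
  forall (H : graph) (Gs : seq graph) (q : nat), (0 < q)%N ->
  nc_le (nc_tens (nc_hat R H) (nc_C R q)) (ncnf R Gs) ->
  f H * powR q%:R beta
    <= \sum_(d < size Gs) f (nth gempty Gs d) * powR (d.+1)%:R beta.
Proof.
move=> [f_ge0 [f_gempty _]] _ le_ab mono H Gs q q_gt0 le_HGs.
have le_pad : nc_le (ncnf R (nseq q.-1 gempty ++ [:: H]))
                    (ncnf R (erase_below q 1 Gs)).
  apply: nc_le_trans (nc_le_erase_below le_HGs).
  by have := nc_le_ncnf_pad R H q.-1 1; rewrite add1n prednK.
have := mono _ _ le_pad; rewrite falpha_pad // prednK // => le_alpha.
rewrite -/(falpha f beta Gs).
apply: le_trans (falpha_erase_below_le f_ge0 f_gempty q Gs le_ab).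
rewrite -[_ `^ beta](powR_mul_sub alpha) ?pnatr_eq0 -?lt0n // mulrA mulrC.
by apply: ler_wpM2l => //; apply: powR_ge0.
Qed.
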